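(* For every $n \geq 2$, every $p=(p_1,\ldots,p_n) \in (0,1)^n$ with $p_1 + \cdots + p_n \leq 1$ and every integer $k \geq 0$, $$\Pr\{T_{2,n}(p) > k\} \geq \Pr\{T_{2,n}(v) > k\} \geq \Pr\{T_{2,n}(u) > k\},$$ where $p_0 = 1 - (p_1 + \cdots + p_n)$, $v=(v_1,\ldots,v_n)$ with $v_i = (1-p_0)/n$, and $u=(1/n,\ldots,1/n)$.
   Context: For a vector $q=(q_1,\ldots,q_n)$ of nonnegative reals with $q_1+\cdots+q_n\le 1$, let $q_0 = 1-(q_1+\cdots+q_n)$; coupons are drawn independently, one at each time $1,2,\ldots$, from $\{0,1,\ldots,n\}$, coupon $i$ with probability $q_i$, and coupon $0$ never belongs to the collection. $T_{2,n}(q)$ is the number of draws needed until 2 distinct coupons among $\{1,\ldots,n\}$ have first been drawn. Convention: $0^0=1$. *)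

From HB Require Import structures.
From mathcomp Require Import all_boot all_order all_algebra.
Set Implicit Arguments. Unset Strict Implicit. Unset Printing Implicit Defensive.
Import Order.TTheory GRing.Theory Num.Theory.
Local Open Scope ring_scope.

(* Coupon 0 of 'I_n.+1 is the "null" coupon; coupon (lift ord0 j) is coupon j+1. *)
Definition qext (R : realFieldType) (n : nat) (q : 'I_n -> R) (i : 'I_n.+1) : R :=
  match unlift ord0 i with
  | None => 1 - \sum_(j < n) q j
  | Some j => q j
  end.

Definition ndistinct (n k : nat) (w : {ffun 'I_k -> 'I_n.+1}) : nat :=
  #|[set w t | t : 'I_k & w t != ord0]|.

(* Pr{ T_{2,n}(q) > k } : probability that after the first k i.i.d. draws
   fewer than 2 distinct coupons of {1,..,n} have been drawn. *)
Definition PrT2gt (R : realFieldType) (n : nat) (q : 'I_n -> R) (k : nat) : R :=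
  \sum_(w : {ffun 'I_k -> 'I_n.+1} | (ndistinct w < 2)%N)
     \prod_(t < k) qext q (w t).

(* Splitting the event {T_{2,n}(q) > k} according to the single coupon that may
   have appeared, inclusion-exclusion gives the closed form
   Pr{T_{2,n}(q) > k} = sum_i (q_0 + q_i)^k - (n - 1) q_0^k.
   For p and v the q_0-term is the same, and sum_i (p_0 + p_i)^k is at least
   n (p_0 + (1 - p_0)/n)^k by convexity of x^k (a tangent-line bound at the mean).
   For v against u only q_0 changes, from 0 to p_0, and
   n (c + (1 - c)/n)^k - (n - 1) c^k does not decrease on [0, 1]. *)
From HB Require Import structures.
From mathcomp Require Import all_boot all_order all_algebra.
From mathcomp Require Import ring lra.
Set Implicit Arguments. Unset Strict Implicit. Unset Printing Implicit Defensive.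

Import Order.TTheory GRing.Theory Num.Theory.
Local Open Scope ring_scope.

Lemma sum_ffun_on_prod (R : comPzRingType) (I J : finType) (F : J -> R)
    (A : pred J) :
  \sum_(w : {ffun I -> J}) [forall t, A (w t)]%:R * \prod_(t : I) F (w t)
  = (\sum_(j | A j) F j) ^+ #|I|.
Proof.
rewrite -prodr_const bigA_distr_big [RHS]big_mkcond; apply: eq_bigr => w _.
have -> : (w \in ffun_on A) = [forall t, A (w t)] by apply/ffun_onP/forallP.
by case: [forall _, _]; rewrite ?mul1r ?mul0r.
Qed.

Section ClosedForm.
Variables (R : realFieldType) (n k : nat) (q : 'I_n -> R).

Lemma qext_ord0 : qext q ord0 = 1 - \sum_(j < n) q j.
Proof. by rewrite /qext unlift_none. Qed.

Lemma qext_lift i : qext q (lift ord0 i) = q i.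
Proof. by rewrite /qext liftK. Qed.

Lemma ndistinct_lt2_incl_excl (w : {ffun 'I_k -> 'I_n.+1}) :
  ((ndistinct w < 2)%N%:R : R) =
  \sum_(i < n) [forall t, (w t == ord0) || (w t == lift ord0 i)]%:R
   - (n%:R - 1) * [forall t, w t == ord0]%:R.
Proof.
have [/forallP w0 | ] := boolP [forall t, w t == ord0].
  have -> : ndistinct w = 0%N.
    apply/eqP; rewrite cards_eq0; apply/eqP/setP => x.
    by rewrite in_set0; apply/imsetP => -[t]; rewrite inE w0.
  rewrite (eq_bigr (fun _ => 1)) => [|i _]; last first.
    by rewrite (_ : [forall _, _] = true) //; apply/forallP => t; rewrite w0.
  by rewrite sumr_const card_ord mulr1 opprB addrC subrK.
rewrite negb_forall => /existsP [t0 wt0]; rewrite mulr0 subr0.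
rewrite eq_sym in wt0; have [i0 wt0E _] := unlift_some wt0.
have only_i0 i : i != i0 ->
    [forall t, (w t == ord0) || (w t == lift ord0 i)] = false.
  move=> ne_ii0; apply/negbTE; rewrite negb_forall; apply/existsP; exists t0.
  by rewrite wt0E eq_sym (negbTE (neq_lift _ _)) (inj_eq lift_inj) eq_sym.
rewrite (bigD1 i0) //= big1 ?addr0 => [|i /only_i0 -> //].
congr (nat_of_bool _)%:R; rewrite /ndistinct.
apply/card_le1_eqP/forallP => [w_le1 t | w_i0 x y].
  have [//|/= wt] := eqVneq (w t) ord0; rewrite -wt0E.
  by apply/eqP/w_le1; apply/imsetP; [exists t0 | exists t]; rewrite ?inE // eq_sym.
move=> /imsetP [t1 wt1 ->] /imsetP [t2 wt2 ->]; rewrite !inE in wt1 wt2.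
move: (w_i0 t1) (w_i0 t2).
by rewrite (negbTE wt1) (negbTE wt2) => /eqP -> /eqP ->.
Qed.

Lemma PrT2gtE : PrT2gt q k =
  \sum_(i < n) (qext q ord0 + q i) ^+ k - (n%:R - 1) * qext q ord0 ^+ k.
Proof.
rewrite /PrT2gt big_mkcond /=.
rewrite (eq_bigr (fun w =>
    (ndistinct w < 2)%N%:R * \prod_(t < k) qext q (w t))) => [|w _]; last first.
  by case: (_ < _)%N; rewrite ?mul1r ?mul0r.
under eq_bigr do rewrite ndistinct_lt2_incl_excl mulrBl -mulrA mulr_suml.
rewrite sumrB -mulr_sumr exchange_big /=.
have card_k := card_ord k.
rewrite (sum_ffun_on_prod _ _ (pred1 ord0)) big_pred1_eq card_k; congr (_ - _).
apply: eq_bigr => i _.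
rewrite (sum_ffun_on_prod _ _ [pred j | (j == ord0) || (j == lift ord0 i)]) card_k.
rewrite (bigD1 ord0) //= (big_pred1 (lift ord0 i)) ?qext_lift // => j /=.
by have [->|] := eqVneq j ord0; rewrite ?andbT //= eq_sym (negbTE (neq_lift _ _)).
Qed.

End ClosedForm.

Lemma PrT2gt_const (R : realFieldType) (n k : nat) (c : R) :
  PrT2gt (fun _ : 'I_n => c) k =
  n%:R * (1 - n%:R * c + c) ^+ k - (n%:R - 1) * (1 - n%:R * c) ^+ k.
Proof. by rewrite PrT2gtE qext_ord0 !sumr_const card_ord !mulr_natl. Qed.

Lemma tangent_exprS_le (R : realDomainType) (x m : R) k :
  0 <= x -> 0 <= m -> m ^+ k.+1 + k.+1%:R * m ^+ k * (x - m) <= x ^+ k.+1.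
Proof.
move=> x_ge0 m_ge0; elim: k => [|k IHk].
  by rewrite expr0 expr1 mulr1 mul1r addrC subrK.
apply: le_trans (_ : x * (m ^+ k.+1 + k.+1%:R * m ^+ k * (x - m)) <= _);
  last by rewrite [leRHS]exprS ler_wpM2l.
rewrite -subr_ge0.
have -> : x * (m ^+ k.+1 + k.+1%:R * m ^+ k * (x - m))
      - (m ^+ k.+2 + k.+2%:R * m ^+ k.+1 * (x - m))
    = k.+1%:R * m ^+ k * (x - m) ^+ 2.
  by rewrite !exprS -[k.+2]addn1 -[k.+1]addn1 !natrD; ring.
by rewrite mulr_ge0 ?sqr_ge0 ?mulr_ge0 ?exprn_ge0.
Qed.

Lemma mean_exprn_le (R : realFieldType) (n k : nat) (x : 'I_n -> R) :
  (0 < n)%N -> (forall i, 0 <= x i) ->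
  n%:R * ((\sum_i x i) / n%:R) ^+ k <= \sum_i x i ^+ k.
Proof.
move=> n_gt0 x_ge0; set m := (\sum_i x i) / n%:R.
have n0 : n%:R != 0 :> R by rewrite pnatr_eq0 -lt0n.
have m_ge0 : 0 <= m by rewrite divr_ge0 ?sumr_ge0.
case: k => [|k]; first by rewrite !expr0 sumr_const card_ord mulr1.
apply: le_trans (ler_sum _ (fun i _ => tangent_exprS_le k (x_ge0 i) m_ge0)).
rewrite big_split /= -mulr_sumr sumrB !sumr_const card_ord.
have -> : \sum_i x i - m *+ n = 0 by rewrite -mulr_natr /m divfK ?subrr.
by rewrite mulr0 addr0 mulr_natl.
Qed.

(* The left side is the right side at c = 0, kept unsimplified since 0 ^+ 0 = 1. *)
Lemma mixture_exprn_ge (R : realFieldType) (N c : R) k :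
  1 <= N -> 0 <= c <= 1 ->
  N * N^-1 ^+ k - (N - 1) * 0 ^+ k
    <= N * (c + (1 - c) / N) ^+ k - (N - 1) * c ^+ k.
Proof.
move=> N_ge1 /andP [c_ge0 c_le1].
case: k => [|k]; first by rewrite !expr0.
have N0 : N != 0 by rewrite gt_eqF // (lt_le_trans ltr01).
set y := c + (1 - c) / N; set a := N^-1.
have Ny : N * y = (N - 1) * c + 1 by rewrite /y; field.
have Na : N * a = 1 by rewrite /a mulfV.
have a_ge0 : 0 <= a by rewrite invr_ge0; lra.
have c_le_y : c <= y by rewrite /y lerDl divr_ge0 ?subr_ge0 //; lra.
have a_le_y : a <= y.
  by rewrite -(ler_pM2l (_ : 0 < N)) ?Ny ?Na; [nra | lra].
have ck_le : c ^+ k <= y ^+ k by rewrite lerXn2r ?nnegrE //; lra.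
have ak_le : a ^+ k <= y ^+ k by rewrite lerXn2r ?nnegrE //; lra.
rewrite expr0n /= mulr0 subr0 !exprS !mulrA Na Ny mul1r -subr_ge0.
have -> : ((N - 1) * c + 1) * y ^+ k - (N - 1) * c * c ^+ k - a ^+ k
    = (y ^+ k - a ^+ k) + (N - 1) * c * (y ^+ k - c ^+ k) by ring.
by rewrite addr_ge0 ?subr_ge0 // !mulr_ge0 ?subr_ge0 //; lra.
Qed.

Theorem theorem5 (R : realFieldType) (n : nat) (hn : (2 <= n)%N)
  (p : 'I_n -> R) (hp : forall i, 0 < p i < 1)
  (hsum : \sum_(i < n) p i <= 1) (k : nat) :
  let p0 := 1 - \sum_(i < n) p i in
  let v : 'I_n -> R := fun _ => (1 - p0) / n%:R in
  let u : 'I_n -> R := fun _ => 1 / n%:R in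
  PrT2gt u k <= PrT2gt v k <= PrT2gt p k.
Proof.
cbv zeta; set p0 := 1 - \sum_(i < n) p i.
have N_ge2 : 2%:R <= n%:R :> R by rewrite ler_nat.
have N0 : n%:R != 0 :> R by rewrite pnatr_eq0 -lt0n (leq_trans _ hn).
have p_ge0 i : 0 <= p i by case/andP: (hp i) => /ltW.
have p0_bounds : 0 <= p0 <= 1 by rewrite subr_ge0 hsum gerBl sumr_ge0.
have qv0 : 1 - n%:R * ((1 - p0) / n%:R) = p0.
  by rewrite mulrC divfK // opprB addrC subrK.
have qu0 : 1 - n%:R * (1 / n%:R) = 0 :> R by rewrite mulrC divfK ?subrr.
rewrite !PrT2gt_const qv0 qu0 add0r div1r PrT2gtE qext_ord0 -/p0.
rewrite mixture_exprn_ge ?(le_trans _ N_ge2) ?ler1n //= lerD2r.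
have -> : p0 + (1 - p0) / n%:R = (\sum_i (p0 + p i)) / n%:R.
  by rewrite big_split /= sumr_const card_ord -[_ *+ n]mulr_natl /p0; field.
case/andP: p0_bounds => p0_ge0 _.
by apply: mean_exprn_le => [|i]; [exact: leq_trans hn | exact: addr_ge0].
Qed.
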